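(* Consider the composite problem and the Stochastic Decoupling Method described in the context, with $f=\frac1n\sum_{i=1}^nf_i$ where each $f_i$ is convex and $L$-smooth, $f$ $\mu$-strongly convex with $\mu>0$, $R$ proper closed convex, each $g_j:\mathbb{R}^d\to\mathbb{R}$ convex and $L_g$-smooth (the same $L_g$ for all $j$), and uniform probabilities $p_1=\dots=p_m=\frac1m$. Let $v^t$ be produced by SVRG or SAGA without minibatching, and suppose this estimator satisfies part (b) of the gradient-estimator condition with $\eta_0=\frac1{5L}$, $\rho=\frac1n$ and a constant $\omega>0$. Define $\eta_{best}:=(\omega\mu mL_g)^{-1/2}$ and set $\eta=\min\{\eta_0,\eta_{best}\}$. Then the number of iterations needed to guarantee $\mathbb{E}\|x^t-x^*\|^2\le\varepsilon$ is $$\mathcal O\left(\left(n+m+\frac L\mu+\sqrt{\frac{mL_g}{\mu}}\right)\log\frac1\varepsilon\right).$$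
   Context: Problem: $\min_{x\in\mathbb{R}^d}f(x)+\frac1m\sum_{j=1}^mg_j(x)+R(x)$, minimizer set nonempty. $L$-smoothness: $h(x)\le h(y)+\langle\nabla h(y),x-y\rangle+\frac L2\|x-y\|^2$; $\mu$-strong convexity: $f(x)\ge f(y)+\langle\nabla f(y),x-y\rangle+\frac\mu2\|x-y\|^2$. $\mathrm{prox}_{\eta h}(x):=\arg\min_u\{h(u)+\frac1{2\eta}\|u-x\|^2\}$. Standing optimality assumption: there exist a minimizer $x^*$, $y_j^*\in\partial g_j(x^* )$, $r^*\in\partial R(x^* )$ with $\nabla f(x^* )+\frac1m\sum_jy_j^*+r^*=0$; fixed. Stochastic Decoupling Method: stepsize $\eta>0$, probabilities $p_j$, $\eta_j:=\eta/(mp_j)$; deterministic start $x^0,y_1^0,\dots,y_m^0$, $y^0:=\frac1m\sum_jy_j^0$. For $t=0,1,\dots$: $v^t$ produced by a gradient estimator; $z^t=\mathrm{prox}_{\eta R}(x^t-\eta v^t-\eta y^t)$; draw $j$ with $\Pr(j=k)=p_k$ independently of the past; $x^{t+1}=\mathrm{prox}_{\eta_jg_j}(z^t+\eta_jy_j^t)$; $y_j^{t+1}=y_j^t+\frac1{\eta_j}(z^t-x^{t+1})$, $y_k^{t+1}=y_k^t$ ($k\ne j$); $y^{t+1}=y^t+\frac1m(y_j^{t+1}-y_j^t)$. SAGA/SVRG estimators (no minibatching): points $u_1^t,\dots,u_n^t$ are stored; an index $i$ is drawn uniformly from $\{1,\dots,n\}$ and $v^t=\nabla f_i(x^t)-\nabla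 f_i(u_i^t)+\frac1n\sum_{k=1}^n\nabla f_k(u_k^t)$. In SAGA, $u_i^{t+1}=x^t$ for the sampled $i$ and $u_k^{t+1}=u_k^t$ otherwise; in SVRG all $u_k^t$ equal a common reference point which is periodically reset to the current iterate. Gradient-estimator condition part (b): with $w^t:=x^t-\eta v^t$, $w^*:=x^*-\eta\nabla f(x^* )$, there are $\eta_0>0$, $\omega>0$ and nonnegative $\{\mathcal M^t\}$ such that for every $\eta\le\eta_0$ and all $t$: either $\mathcal M^t\equiv0$, or $\mathbb{E}\|w^t-w^*\|^2+\mathcal M^{t+1}\le(1-\omega\eta\mu)\mathbb{E}\|x^t-x^*\|^2+(1-\rho)\mathcal M^t$. *)

From HB Require Import structures.
From mathcomp Require Import all_boot all_order all_algebra.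
From mathcomp Require Import all_classical all_reals all_analysis.
Import Order.TTheory GRing.Theory Num.Theory.
Import numFieldNormedType.Exports.

Set Implicit Arguments.
Unset Strict Implicit.
Unset Printing Implicit Defensive.

Local Open Scope ring_scope.
Local Open Scope classical_set_scope.

Definition dotv {R : realType} {d : nat} (u v : 'rV[R]_d) : R :=
  \sum_(k < d) u 0 k * v 0 k.

Definition sqnorm {R : realType} {d : nat} (u : 'rV[R]_d) : R := dotv u u.

Definition grad {R : realType} {d : nat} (h : 'rV[R]_d -> R) (x : 'rV[R]_d)
  : 'rV[R]_d := \row_(k < d) ('d h x (delta_mx 0 k : 'rV[R]_d)).

Definition convex_fun {R : realType} {d : nat} (h : 'rV[R]_d -> R) : Prop :=
  forall (x y : 'rV[R]_d) (l : R), 0 <= l <= 1 ->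
    h (l *: x + (1 - l) *: y) <= l * h x + (1 - l) * h y.

Definition smooth {R : realType} {d : nat} (L : R) (h : 'rV[R]_d -> R) : Prop :=
  (forall x, differentiable h x) /\
  forall x y : 'rV[R]_d,
    h x <= h y + dotv (grad h y) (x - y) + L / 2 * sqnorm (x - y).

Definition strongly_convex {R : realType} {d : nat} (mu : R)
  (h : 'rV[R]_d -> R) : Prop :=
  (forall x, differentiable h x) /\
  forall x y : 'rV[R]_d,
    h y + dotv (grad h y) (x - y) + mu / 2 * sqnorm (x - y) <= h x.

Definition proper_fun {R : realType} {d : nat} (h : 'rV[R]_d -> \bar R) : Prop :=
  (forall x, h x != -oo%E) /\ (exists x, h x != +oo%E).

Definition closed_fun {R : realType} {d : nat} (h : 'rV[R]_d -> \bar R) : Prop :=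
  closed [set p : 'rV[R]_d * R | (h p.1 <= p.2%:E)%E].

Definition convex_efun {R : realType} {d : nat} (h : 'rV[R]_d -> \bar R) : Prop :=
  forall (x y : 'rV[R]_d) (l : R), 0 <= l <= 1 ->
    (h x < +oo)%E -> (h y < +oo)%E ->
    (h (l *: x + (1 - l) *: y)%R <= l%:E * h x + (1 - l)%:E * h y)%E.

Definition subgrad {R : realType} {d : nat} (h : 'rV[R]_d -> R) (x s : 'rV[R]_d)
  : Prop := forall u, h x + dotv s (u - x) <= h u.

Definition esubgrad {R : realType} {d : nat} (h : 'rV[R]_d -> \bar R)
  (x s : 'rV[R]_d) : Prop :=
  forall u, (h x + (dotv s (u - x))%:E <= h u)%E.

(** It is defined by (classical) choice of a minimizer; under the paper's
    hypotheses the minimizer exists and is unique. *)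
Definition prox {R : realType} {d : nat} (h : 'rV[R]_d -> \bar R) (eta : R)
  (x : 'rV[R]_d) : 'rV[R]_d :=
  get [set u | forall v : 'rV[R]_d,
         (h u + ((2 * eta)^-1 * sqnorm (u - x))%:E
          <= h v + ((2 * eta)^-1 * sqnorm (v - x))%:E)%E].

(** Gradient estimators (no minibatching). SVRG T: the common reference
    point is reset to the current iterate every T iterations. *)
Inductive estimator := SAGA | SVRG of nat.

Record sdm_state (R : realType) (d n m : nat) := SDMState {
  st_x : 'rV[R]_d;
  st_y : 'I_m -> 'rV[R]_d;
  st_ybar : 'rV[R]_d;
  st_u : 'I_n -> 'rV[R]_d
}.

Section SDM.
Context {R : realType} {d n m : nat}.
Context (fs : 'I_n -> 'rV[R]_d -> R) (gs : 'I_m -> 'rV[R]_d -> R)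
        (Rf : 'rV[R]_d -> \bar R) (eta : R) (p : 'I_m -> R) (est : estimator).

Definition sdm_v (s : sdm_state R d n m) (i : 'I_n) : 'rV[R]_d :=
  grad (fs i) (st_x s) - grad (fs i) (st_u s i)
  + n%:R^-1 *: \sum_(k < n) grad (fs k) (st_u s k).

Definition sdm_step (t : nat) (s : sdm_state R d n m) (ij : 'I_n * 'I_m)
  : sdm_state R d n m :=
  let i := ij.1 in let j := ij.2 in
  let x := st_x s in
  let v := sdm_v s i in
  let z := prox Rf eta (x - eta *: v - eta *: st_ybar s) in
  let eta_j := eta / (m%:R * p j) in
  let x' := prox (fun u => (gs j u)%:E) eta_j (z + eta_j *: st_y s j) in
  let yj' := st_y s j + eta_j^-1 *: (z - x') in
  let y' := fun k => if k == j then yj' else st_y s k in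
  let ybar' := st_ybar s + m%:R^-1 *: (yj' - st_y s j) in
  let u' := match est with
            | SAGA => fun k => if k == i then x else st_u s k
            | SVRG T => if (T %| t.+1)%N then (fun _ => x') else st_u s
            end in
  SDMState x' y' ybar' u'.

Fixpoint sdm_run (t0 : nat) (s : sdm_state R d n m) (h : seq ('I_n * 'I_m))
  : sdm_state R d n m :=
  match h with
  | [::] => s
  | ij :: h' => sdm_run t0.+1 (sdm_step t0 s ij) h'
  end.

(** Expectation of a function of the first t sampled pairs: i is uniform on
    {1..n}, j has law p, all draws independent. *)
Definition sdm_expect (t : nat) (F : seq ('I_n * 'I_m) -> R) : R :=
  \sum_(h : t.-tuple ('I_n * 'I_m))
     (\prod_(ij <- h) (n%:R^-1 * p ij.2)) * F h.

Definition sdm_Ex (s0 : sdm_state R d n m) (xs : 'rV[R]_d) (t : nat) : R :=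
  sdm_expect t (fun h => sqnorm (st_x (sdm_run 0 s0 h) - xs)).

Definition sdm_Ew (s0 : sdm_state R d n m) (xs : 'rV[R]_d) (t : nat) : R :=
  sdm_expect t (fun h =>
    let s := sdm_run 0 s0 h in
    \sum_(i < n) n%:R^-1 *
      sqnorm ((st_x s - eta *: sdm_v s i)
              - (xs - eta *: grad (fun x => n%:R^-1 * \sum_(k < n) fs k x) xs))).

End SDM.

(* With gamma = eta^2 + 2 eta / L_g, the Lyapunov function
     Psi_t = E |x^t - x*|^2 + M_t + gamma * sum_j E |y_j^t - y_j*|^2
   contracts by a factor 1 - theta at every iteration.  The prox step of R is
   controlled by the monotonicity of the subdifferential of R at z^t and x*,
   the prox step of g_j by the cocoercivity of the gradient of g_j, and averaging
   over the uniformly sampled j gives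
     E |x^(t+1) - x*|^2 + gamma E sum_j |y_j^(t+1) - y_j*|^2
       <= E |w^t - w*|^2 + (gamma - 2 eta / (L_g m)) E sum_j |y_j^t - y_j*|^2.
   Adding part (b) of the estimator condition, theta can be any number below
   omega eta mu, 1/n and 2 eta / (L_g m gamma); for eta = min(eta0, eta_best) the
   inverse of these rates is at most C (n + m + L/mu + sqrt(m L_g / mu)), and
   Psi_t <= exp(- theta t) Psi_0 gives the iteration count.  Since prox is
   defined by choice, one also needs the prox objectives to attain their
   minimum: their sublevel sets are closed and bounded. *)

From HB Require Import structures.
From mathcomp Require Import all_boot all_order all_algebra.
From mathcomp Require Import all_classical all_reals all_analysis.
From mathcomp Require Import ring lra.
Import Order.TTheory GRing.Theory Num.Theory.
Import numFieldNormedType.Exports.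
Local Open Scope ring_scope.
Local Open Scope classical_set_scope.

Section InnerProduct.
Context {R : realType} {d : nat}.
Implicit Types (u v w : 'rV[R]_d) (a : R).

Lemma dotvC u v : dotv u v = dotv v u.
Proof. by apply: eq_bigr => k _; rewrite mulrC. Qed.

Lemma dotvDl u v w : dotv (u + v) w = dotv u w + dotv v w.
Proof. by rewrite /dotv -big_split; apply: eq_bigr => k _; rewrite mxE mulrDl. Qed.

Lemma dotvZl a u v : dotv (a *: u) v = a * dotv u v.
Proof. by rewrite /dotv mulr_sumr; apply: eq_bigr => k _; rewrite mxE mulrA. Qed.

Lemma dotvNl u v : dotv (- u) v = - dotv u v.
Proof. by rewrite -scaleN1r dotvZl mulN1r. Qed.

Lemma dotvBl u v w : dotv (u - v) w = dotv u w - dotv v w.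
Proof. by rewrite dotvDl dotvNl. Qed.

Lemma dotvDr u v w : dotv w (u + v) = dotv w u + dotv w v.
Proof. by rewrite !(dotvC w) dotvDl. Qed.

Lemma dotvZr a u v : dotv v (a *: u) = a * dotv v u.
Proof. by rewrite !(dotvC v) dotvZl. Qed.

Lemma dotvNr u v : dotv v (- u) = - dotv v u.
Proof. by rewrite !(dotvC v) dotvNl. Qed.

Lemma dotv_sumr (I : finType) u (v : I -> 'rV[R]_d) :
  dotv u (\sum_i v i) = \sum_i dotv u (v i).
Proof.
apply: (big_morph (dotv u) (fun x y => dotvDr x y u)).
by rewrite dotvC /dotv big1 // => k _; rewrite mxE mul0r.
Qed.

Lemma sqnorm_ge0 u : 0 <= sqnorm u.
Proof. by apply: sumr_ge0 => k _; rewrite -expr2 sqr_ge0. Qed.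

Lemma sqnorm_eq0 u : (sqnorm u == 0) = (u == 0).
Proof.
apply/idP/eqP => [|->]; last by rewrite /sqnorm /dotv big1 // => k _; rewrite mxE mul0r.
rewrite psumr_eq0 => [/allP u0|k _]; last by rewrite -expr2 sqr_ge0.
apply/rowP => k; rewrite mxE; apply/eqP.
by rewrite -sqrf_eq0 expr2; apply: u0; rewrite mem_index_enum.
Qed.

Lemma sqnormD u v : sqnorm (u + v) = sqnorm u + 2 * dotv u v + sqnorm v.
Proof. rewrite /sqnorm dotvDl !dotvDr (dotvC v u); lra. Qed.

Lemma sqnormZ a u : sqnorm (a *: u) = a ^+ 2 * sqnorm u.
Proof. by rewrite /sqnorm dotvZl dotvZr mulrA expr2. Qed.

Lemma sqnormN u : sqnorm (- u) = sqnorm u.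
Proof. by rewrite /sqnorm dotvNl dotvNr opprK. Qed.

Lemma dotv_le_sqnorm u v : 2 * dotv u v <= sqnorm u + sqnorm v.
Proof.
have := sqnorm_ge0 (u - v); rewrite sqnormD sqnormN dotvNr.
rewrite /sqnorm; lra.
Qed.

End InnerProduct.

Section Smoothness.
Context {R : realType} {d : nat} {L : R} {g : 'rV[R]_d -> R}.
Hypotheses (L_gt0 : 0 < L) (g_smooth : smooth L g).
Implicit Types (x y s t : 'rV[R]_d).

Lemma smooth_subgrad_grad {x s} : subgrad g x s -> s = grad g x.
Proof.
case: g_smooth => _ g_upper sub_s.
set D := s - grad g x; set k := L^-1.
have k_gt0 : 0 < k by rewrite invr_gt0.
(* Both bounds at [x + D / L] give [|D|^2 / L <= |D|^2 / (2 L)]. *)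
have := g_upper (x + k *: D) x; have := sub_s (x + k *: D).
rewrite [x + _]addrC addrK !dotvZr sqnormZ.
have -> : dotv s D = sqnorm D + dotv (grad g x) D by rewrite /sqnorm /D dotvBl; lra.
have -> : L / 2 * (k ^+ 2 * sqnorm D) = k / 2 * sqnorm D by rewrite /k; field; rewrite gt_eqF.
move=> lower upper; have /eqP : sqnorm D = 0 by have := sqnorm_ge0 D; nra.
by rewrite sqnorm_eq0 subr_eq0 => /eqP.
Qed.

(* Descent lemma at [y] along [- (t - s) / L], with [t] the gradient at [y]. *)
Lemma smooth_subgrad_gap {x y s t} : subgrad g x s -> subgrad g y t ->
  g x + dotv s (y - x) + (2 * L)^-1 * sqnorm (t - s) <= g y.
Proof.
move=> sub_s sub_t; have grad_t := smooth_subgrad_grad sub_t.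
case: g_smooth => _ g_upper.
set D := t - s; set k := L^-1; set u := y - k *: D.
have lower := sub_s u; have upper := g_upper u y; rewrite -grad_t in upper.
have -> : (2 * L)^-1 = k / 2 by rewrite invfM mulrC.
have eu : u - y = - (k *: D) by rewrite /u addrAC subrr add0r.
have eux : u - x = (y - x) + (u - y) by rewrite [RHS]addrC addrA subrK.
rewrite eux dotvDr eu !dotvNr !dotvZr sqnormN sqnormZ in lower upper.
have tD : dotv t D = sqnorm D + dotv s D by rewrite /sqnorm /D dotvBl; lra.
have kk : L / 2 * (k ^+ 2 * sqnorm D) = k / 2 * sqnorm D.
  by rewrite /k; field; rewrite gt_eqF.
rewrite tD kk in upper; lra.
Qed.

Lemma smooth_cocoercive {x y s t} : subgrad g x s -> subgrad g y t ->
  sqnorm (s - t) <= L * dotv (s - t) (x - y).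
Proof.
move=> sub_s sub_t.
have gap_xy := smooth_subgrad_gap sub_s sub_t.
have gap_yx := smooth_subgrad_gap sub_t sub_s.
have -> : sqnorm (s - t) = sqnorm (t - s) by rewrite -sqnormN opprB.
rewrite -[sqnorm (s - t)]sqnormN opprB in gap_yx.
have -> : dotv (s - t) (x - y) = - dotv s (y - x) - dotv t (x - y).
  by rewrite dotvBl -(opprB y x) dotvNr; lra.
have halve : (2 * L)^-1 = L^-1 / 2 by rewrite invfM mulrC.
rewrite -(@ler_pM2l _ L^-1) ?invr_gt0 // mulrA mulVf ?gt_eqF // mul1r.
by rewrite halve in gap_xy gap_yx; lra.
Qed.

End Smoothness.

Section Topology.
Context {R : realType} {d : nat}.

Lemma sqnorm_continuous : continuous (@sqnorm R d).
Proof.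
apply: continuous_big => [|k _]; first exact: add_continuous.
by move=> v; apply: continuousM; exact: coord_continuous.
Qed.

Lemma sqnormB_continuous (a : 'rV[R]_d) :
  continuous (fun v : 'rV[R]_d => sqnorm (v - a)).
Proof.
move=> v; have := @continuous_comp _ _ _ (fun w : 'rV[R]_d => w - a) (@sqnorm R d) v.
apply; first exact: (cvgB cvg_id (cvg_cst a)).
exact: sqnorm_continuous.
Qed.

Lemma norm_le_sqnorm (v : 'rV[R]_d) : `|v| <= 1 + sqnorm v.
Proof.
rewrite [leLHS]/Num.norm /= mx_normrE.
apply: bigmax_le => [|[i k] _ /=]; first by rewrite addr_ge0 ?sqnorm_ge0.
rewrite (ord1 i); apply: le_trans (_ : _ <= 1 + v 0 k ^+ 2) _.
  by rewrite -real_normK ?num_real //; have := sqr_ge0 (`|v 0 k| - 1); nra.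
rewrite lerD2l /sqnorm /dotv (bigD1 k) //= -expr2 lerDl.
by apply: sumr_ge0 => j _; rewrite -expr2 sqr_ge0.
Qed.

Lemma sqnorm_bounded (A : set 'rV[R]_d) (a : 'rV[R]_d) (B : R) :
  (forall v, A v -> sqnorm (v - a) <= B) -> bounded_set A.
Proof.
move=> AB; exists (`|a| + 1 + B); split; first by rewrite num_real.
move=> M ltM v /AB le_vB; apply: le_trans (ltW ltM).
rewrite -[v](subrK a) addrC; apply: le_trans (ler_normD _ _) _.
by have := norm_le_sqnorm (v - a); rewrite -addrA lerD2l; lra.
Qed.

Lemma closed_fun_EFin (g : 'rV[R]_d -> R) :
  continuous g -> closed_fun (fun x => (g x)%:E).
Proof.
move=> g_cont; rewrite /closed_fun.
have -> : [set p : 'rV[R]_d * R | ((g p.1)%:E <= p.2%:E)%E] =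
    (fun p => g p.1 - p.2) @^-1` [set r : R | r <= 0].
  by apply/seteqP; split => p /=; rewrite lee_fin subr_le0.
apply: (proj1 (continuous_closedP _)); last exact: closed_le.
move=> p; apply: continuousB; last exact: cvg_snd.
by apply: continuous_comp; [exact: cvg_fst | exact: g_cont].
Qed.

End Topology.

(* The closed sublevel sets are nested, so inside the compact one they have the
   finite intersection property. *)
Lemma closed_sublevel_argmin {R : realType} {T : ptopologicalType}
    (psi : T -> \bar R) (x0 : T) (c0 : R) :
  (forall c : R, closed [set x | (psi x <= c%:E)%E]) ->
  (forall x, psi x != -oo%E) ->
  compact [set x | (psi x <= c0%:E)%E] -> (psi x0 <= c0%:E)%E ->
  exists u, forall v, (psi u <= psi v)%E.
Proof.
move=> closed_sub psi_ninfty A_compact x0_A.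
set A := [set x | _] in A_compact x0_A.
pose D := [set c : R | exists x, (psi x <= c%:E)%E].
move: A_compact; rewrite compact_In0 => /(_ R D (fun c => A `&` [set x | (psi x <= c%:E)%E])) [].
- by exists (fun c => [set x | (psi x <= c%:E)%E]).
- move=> D' sub_D'.
  suff [x [Ax D'x]] : exists x, A x /\ forall c, c \in finmap.enum_fset D' ->
      (psi x <= c%:E)%E by exists x => c /= D'c; split => //; exact: D'x.
  have : {subset finmap.enum_fset D' <= D} by move=> c /sub_D'.
  elim: (finmap.enum_fset D') => [|b l IHl] lD; first by exists x0.
  have [x [Ax lx]] := IHl (fun c l_c => lD c (mem_behead (s := b :: l) l_c)).
  have /set_mem [y yb] := lD b (mem_head _ _).
  have [xy|yx] := leP (psi x) (psi y).
  + exists x; split => // c; rewrite inE => /predU1P[->|]; [exact: le_trans yb|exact: lx].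
  + exists y; split => [|c]; first exact: le_trans (ltW yx) Ax.
    by rewrite inE => /predU1P[->//|/lx]; apply: le_trans (ltW yx).
- move=> u uD; exists u => v; have := psi_ninfty v.
  case ev: (psi v) => [r| |] // _; last exact: leey.
  have Dr : D r by exists v; rewrite ev.
  by have [] := uD r Dr.
Qed.

Lemma ler_of_le_add_small {R : realFieldType} (A B C : R) : 0 <= C ->
  (forall l, 0 < l <= 1 -> A <= B + l * C) -> A <= B.
Proof.
move=> C_ge0 le_AB; apply/ler_addgt0Pr => e e_gt0.
have [C0|C_neq0] := eqVneq C 0.
  by apply: le_trans (le_AB 1 _) _; rewrite ?ltr01 ?lexx // C0 mulr0 addr0 lerDl ltW.
have C_gt0 : 0 < C by rewrite lt_def C_neq0.
set l := Num.min 1 (e / C).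
have l_gt0 : 0 < l by rewrite lt_min ltr01 divr_gt0.
apply: le_trans (le_AB l _) _; first by rewrite l_gt0 ge_min lexx.
by rewrite lerD2l -ler_pdivlMr // ge_min lexx orbT.
Qed.

Definition prox_obj {R : realType} {d : nat} (h : 'rV[R]_d -> \bar R) (eta : R)
  (a v : 'rV[R]_d) : \bar R :=
  (h v + ((2 * eta)^-1 * sqnorm (v - a))%:E)%E.

Lemma esubgrad_fin {R : realType} {d : nat} {h : 'rV[R]_d -> \bar R} {x s} :
  proper_fun h -> esubgrad h x s -> exists r, h x = r%:E.
Proof.
case=> h_ninfty [y hy_fin] sub_s; move: (h_ninfty x) (sub_s y).
case: (h x) => [r _ _| _|//]; first by exists r.
by rewrite addye // leye_eq (negbTE hy_fin).
Qed.

Lemma esubgrad_monotone {R : realType} {d : nat} {h : 'rV[R]_d -> \bar R}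
    {x y s t} {rx ry : R} :
  h x = rx%:E -> h y = ry%:E -> esubgrad h x s -> esubgrad h y t ->
  0 <= dotv (s - t) (x - y).
Proof.
move=> hx hy sub_s sub_t; have := sub_s y; have := sub_t x.
rewrite hx hy -!EFinD !lee_fin dotvBl -(opprB x y) dotvNr; lra.
Qed.

Section Prox.
Context {R : realType} {d : nat}.
Context {h : 'rV[R]_d -> \bar R} {eta : R}.
Hypotheses (eta_gt0 : 0 < eta) (h_closed : closed_fun h)
  (h_ninfty : forall x, h x != -oo%E).
Context {x0 s0 : 'rV[R]_d} {r0 : R}.
Hypotheses (h_x0 : h x0 = r0%:E) (sub_x0 : esubgrad h x0 s0).
Implicit Types (a u v : 'rV[R]_d).

Let k := (2 * eta)^-1.
Let k_gt0 : 0 < k. Proof. by rewrite invr_gt0 mulr_gt0. Qed.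

Lemma prox_obj_closed a (c : R) : closed [set v | (prox_obj h eta a v <= c%:E)%E].
Proof.
have -> : [set v | (prox_obj h eta a v <= c%:E)%E] =
    (fun v => (v, c - k * sqnorm (v - a))) @^-1` [set p | (h p.1 <= p.2%:E)%E].
  apply/seteqP; split => v /=; rewrite /prox_obj;
    by case: (h v) (h_ninfty v) => [r| |] // _; rewrite -?EFinD ?lee_fin ?lerBrDr.
apply: (proj1 (continuous_closedP _)) h_closed; move=> v.
have cvg_snd : (fun w => c - k * sqnorm (w - a)) @ v --> c - k * sqnorm (v - a).
  exact: cvgB (cvg_cst c) (cvgM (cvg_cst k) (sqnormB_continuous a v)).
exact: cvg_pair cvg_id cvg_snd.
Qed.

Lemma prox_obj_bounded a (c : R) : bounded_set [set v | (prox_obj h eta a v <= c%:E)%E].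
Proof.
pose B := (2 * k * (c - r0 - dotv s0 (a - x0)) + sqnorm s0) / (k * k).
apply: (@sqnorm_bounded _ _ _ a B) => v /= le_vc.
have : ((r0 + dotv s0 (v - x0))%:E + (k * sqnorm (v - a))%:E <= c%:E)%E.
  by apply: le_trans le_vc; apply: leeD => //; rewrite EFinD -h_x0; exact: sub_x0.
have -> : dotv s0 (v - x0) = dotv s0 (a - x0) + dotv s0 (v - a).
  by rewrite -dotvDr [in RHS]addrC addrA subrK.
rewrite -EFinD lee_fin /B ler_pdivlMr ?mulr_gt0 // => le_c.
(* Young: [- 2 k dotv s0 e <= k^2 |e|^2 + |s0|^2] with [e = v - a] *)
have := sqnorm_ge0 (k *: (v - a) + s0).
rewrite (sqnormD (k *: _)) sqnormZ dotvZl (dotvC _ s0).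
have := ler_wpM2l (ltW k_gt0) le_c; nra.
Qed.

Lemma prox_argmin a v : (prox_obj h eta a (prox h eta a) <= prox_obj h eta a v)%E.
Proof.
have [u min_u] : exists u, forall v, (prox_obj h eta a u <= prox_obj h eta a v)%E.
  apply: (@closed_sublevel_argmin _ _ (prox_obj h eta a) x0 (r0 + k * sqnorm (x0 - a))).
  - exact: prox_obj_closed.
  - by move=> x; rewrite /prox_obj; case: (h x) (h_ninfty x).
  - by apply: bounded_closed_compact; [exact: prox_obj_bounded | exact: prox_obj_closed].
  - by rewrite /prox_obj h_x0.
exact: (getPex (P := [set u | forall v, (prox_obj h eta a u <= prox_obj h eta a v)%E])
  (ex_intro _ u min_u)).
Qed.

Lemma prox_fin a : exists r, h (prox h eta a) = r%:E.
Proof.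
have := prox_argmin a x0; rewrite /prox_obj h_x0.
by case: (h _) (h_ninfty (prox h eta a)) => [r _ _| |//]; [exists r|].
Qed.

Lemma prox_esubgrad a : convex_efun h ->
  esubgrad h (prox h eta a) (eta^-1 *: (a - prox h eta a)).
Proof.
move=> h_convex v; set u := prox h eta a; have [hu h_u] := prox_fin a.
rewrite h_u -EFinD; case h_v: (h v) (h_ninfty v) => [hv| |] // _; last exact: leey.
rewrite lee_fin; set w := v - u.
have -> : dotv (eta^-1 *: (a - u)) w = - (2 * k) * dotv (u - a) w.
  by rewrite dotvZl -opprB dotvNl /k invfM mulrA mulfV ?gt_eqF // mul1r mulNr mulrN.
apply: (@ler_of_le_add_small _ _ _ (k * sqnorm w)) => [|l /andP[l_gt0 l_le1]].
  by rewrite mulr_ge0 ?sqnorm_ge0 ?ltW.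
(* Compare [u] with the point [u + l w] of the segment [u, v]. *)
have conv := h_convex v u l; rewrite h_v h_u !ltey -!EFinM -EFinD in conv.
have le_obj := prox_argmin a (l *: v + (1 - l) *: u).
have l01 : 0 <= l <= 1 by rewrite (ltW l_gt0) l_le1.
have {conv} := le_trans le_obj (leeD (conv l01 isT isT) (lexx _)).
rewrite /prox_obj -/u -/k h_u -!EFinD lee_fin.
have -> : l *: v + (1 - l) *: u - a = (u - a) + l *: w.
  by apply/rowP => i; rewrite !mxE; ring.
rewrite (sqnormD (u - a)) sqnormZ dotvZr => le_l.
have : l * (hu - 2 * k * dotv (u - a) w) <= l * (hv + l * (k * sqnorm w)).
  by move: le_l; lra.
by rewrite ler_pM2l // mulNr.
Qed.

Lemma prox_le_dotv a : convex_efun h ->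
  sqnorm (prox h eta a - x0) <= dotv (a - (x0 + eta *: s0)) (prox h eta a - x0).
Proof.
move=> h_convex; set z := prox h eta a; have [hz h_z] := prox_fin a.
have := esubgrad_monotone h_z h_x0 (prox_esubgrad a h_convex) sub_x0.
have -> : eta^-1 *: (a - z) - s0 = eta^-1 *: (a - (x0 + eta *: s0) - (z - x0)).
  by apply/rowP => i; rewrite !mxE; field; rewrite gt_eqF.
by rewrite dotvZl pmulr_rge0 ?invr_gt0 // dotvBl subr_ge0.
Qed.
End Prox.

Lemma esubgrad_EFin {R : realType} {d : nat} (g : 'rV[R]_d -> R) x s :
  esubgrad (fun u => (g u)%:E) x s <-> subgrad g x s.
Proof. by split => sub_s u; have := sub_s u; rewrite -EFinD lee_fin. Qed.

Lemma convex_efun_EFin {R : realType} {d : nat} (g : 'rV[R]_d -> R) :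
  convex_fun g -> convex_efun (fun u => (g u)%:E).
Proof. by move=> g_convex x y l l01 _ _; rewrite -!EFinM -EFinD lee_fin; exact: g_convex. Qed.

Definition dual_weight {R : realFieldType} (eta Lg : R) := eta ^+ 2 + 2 * eta / Lg.

Lemma prox_smooth_le {R : realType} {d : nat} {g : 'rV[R]_d -> R} {Lg eta : R}
    (a : 'rV[R]_d) {xs ys : 'rV[R]_d} :
  0 < eta -> 0 < Lg -> convex_fun g -> smooth Lg g -> subgrad g xs ys ->
  sqnorm (prox (fun u => (g u)%:E) eta a - xs)
    + dual_weight eta Lg * sqnorm (eta^-1 *: (a - prox (fun u => (g u)%:E) eta a) - ys)
  <= sqnorm (a - (xs + eta *: ys)).
Proof.
move=> eta_gt0 Lg_gt0 g_convex g_smooth sub_ys.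
set x' := prox _ eta a; set y' := eta^-1 *: (a - x').
have g_cont : continuous g by move=> x; exact: differentiable_continuous (g_smooth.1 x).
have sub_y' : subgrad g x' y'.
  apply/esubgrad_EFin; apply: (prox_esubgrad eta_gt0 (closed_fun_EFin _ g_cont)
    (fun=> isT) (erefl (g xs)%:E) _ _ (convex_efun_EFin _ g_convex)).
  exact/esubgrad_EFin.
have cocoercive := smooth_cocoercive Lg_gt0 g_smooth sub_y' sub_ys.
have -> : a - (xs + eta *: ys) = (x' - xs) + eta *: (y' - ys).
  by apply/rowP => i; rewrite !mxE; field; rewrite gt_eqF.
rewrite (sqnormD (x' - xs)) sqnormZ dotvZr (dotvC (x' - xs)).
have c_ge0 : 0 <= 2 * eta / Lg by rewrite divr_ge0 ?mulr_ge0 ?ltW.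
have := ler_wpM2l c_ge0 cocoercive.
have -> : 2 * eta / Lg * (Lg * dotv (y' - ys) (x' - xs)) = 2 * eta * dotv (y' - ys) (x' - xs).
  by field; rewrite gt_eqF.
rewrite /dual_weight; lra.
Qed.

Section Expectation.
Context {R : realType} {n m : nat} (p : 'I_m -> R).
Hypothesis p_ge0 : forall j, 0 <= p j.
Local Notation T := ('I_n * 'I_m)%type.
Implicit Types (F G : seq T -> R).

Let weight_ge0 (h : seq T) : 0 <= \prod_(ij <- h) (n%:R^-1 * p ij.2).
Proof. by apply: prodr_ge0 => ij _; rewrite mulr_ge0 ?invr_ge0. Qed.

Lemma sdm_expect0 F : sdm_expect p 0 F = F [::].
Proof.
rewrite /sdm_expect (big_pred1 [tuple]) => [|h]; last by apply/esym/eqP; exact: tuple0.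
by rewrite big_nil mul1r.
Qed.

Lemma sdm_expect_cons t F : sdm_expect p t.+1 F =
  \sum_(ij : T) (n%:R^-1 * p ij.2) * sdm_expect p t (fun h => F (ij :: h)).
Proof.
rewrite /sdm_expect (reindex (fun xh : T * t.-tuple T => cons_tuple xh.1 xh.2)) /=.
  rewrite -(pair_bigA _ (fun ij (h : t.-tuple T) =>
    (\prod_(ij' <- ij :: h) (n%:R^-1 * p ij'.2)) * F (ij :: h))) /=.
  apply: eq_bigr => ij _; rewrite mulr_sumr.
  by apply: eq_bigr => h _; rewrite big_cons mulrA.
exists (fun h : t.+1.-tuple T => (thead h, [tuple of behead h])) => [[ij h] _|h _].
  by congr pair; apply: val_inj.
by rewrite [RHS]tuple_eta; apply: val_inj.
Qed.

Lemma sdm_expect_rcons t F : sdm_expect p t.+1 F =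
  sdm_expect p t (fun h => \sum_(ij : T) (n%:R^-1 * p ij.2) * F (rcons h ij)).
Proof.
elim: t F => [|t IHt] F; rewrite sdm_expect_cons.
  by rewrite sdm_expect0; apply: eq_bigr => ij _; rewrite sdm_expect0.
by rewrite [RHS]sdm_expect_cons; apply: eq_bigr => ij _; rewrite IHt.
Qed.

Lemma ler_sdm_expect t F G : (forall h, F h <= G h) -> sdm_expect p t F <= sdm_expect p t G.
Proof.
by move=> le_FG; apply: ler_sum => h _; apply: ler_wpM2l; [exact: weight_ge0 | exact: le_FG].
Qed.

Lemma sdm_expect_ge0 t F : (forall h, 0 <= F h) -> 0 <= sdm_expect p t F.
Proof.
by move=> F_ge0; apply: sumr_ge0 => h _; apply: mulr_ge0; [exact: weight_ge0 | exact: F_ge0].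
Qed.

Lemma sdm_expectDZ t F G (c : R) :
  sdm_expect p t (fun h => F h + c * G h) = sdm_expect p t F + c * sdm_expect p t G.
Proof.
rewrite /sdm_expect mulr_sumr -big_split; apply: eq_bigr => h _ /=.
by rewrite mulrDr mulrCA.
Qed.

End Expectation.

Lemma geometric_complexity {R : realType} (u : nat -> R) (theta K eps : R) (t : nat) :
  0 < theta <= 1 -> (forall k, 0 <= u k) -> (forall k, u k.+1 <= (1 - theta) * u k) ->
  u 0%N <= K -> 0 < K -> 0 < eps -> ln (K / eps) <= theta * t%:R -> u t <= eps.
Proof.
move=> /andP[theta_gt0 theta_le1] u_ge0 u_contr u0_le K_gt0 eps_gt0 t_large.
have decay k : u k <= expR (- (theta * k%:R)) * u 0%N.
  elim: k => [|k IHk]; first by rewrite mulr0 oppr0 expR0 mul1r.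
  apply: le_trans (u_contr k) _; apply: le_trans (ler_wpM2l _ IHk) _.
    by rewrite subr_ge0.
  rewrite mulrA ler_wpM2r // -natr1 mulrDr mulr1 opprD expRD mulrC.
  by rewrite ler_wpM2l ?expR_ge0 //; have := expR_ge1Dx (- theta); lra.
apply: le_trans (decay t) _; apply: le_trans (ler_wpM2l (expR_ge0 _) u0_le) _.
rewrite -ler_pdivlMr // -[_ / K]lnK ?posrE ?divr_gt0 // ler_expR.
by rewrite -[X in _ <= X]opprK lerN2 -lnV ?posrE ?divr_gt0 // invf_div.
Qed.

Lemma lyapunov_contraction {R : realFieldType} (x x' y y' M M' w gamma a r c theta : R) :
  x' + gamma * y' <= w + (gamma - c) * y -> w + M' <= (1 - a) * x + (1 - r) * M ->
  0 <= x -> 0 <= y -> 0 <= M -> theta <= a -> theta <= r -> theta * gamma <= c ->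
  x' + M' + gamma * y' <= (1 - theta) * (x + M + gamma * y).
Proof.
move=> descent_x descent_M x_ge0 y_ge0 M_ge0 le_a le_r le_c.
have := ler_wpM2r x_ge0 le_a; have := ler_wpM2r M_ge0 le_r; have := ler_wpM2r y_ge0 le_c.
lra.
Qed.

Section SDMConvergence.
Context {R : realType} {d n m : nat}.
Variables (fs : 'I_n -> 'rV[R]_d -> R) (gs : 'I_m -> 'rV[R]_d -> R)
  (Rf : 'rV[R]_d -> \bar R) (eta Lg : R) (est : estimator).
Variables (xs rs : 'rV[R]_d) (ys : 'I_m -> 'rV[R]_d) (rxs : R).
Hypotheses (eta_gt0 : 0 < eta) (Lg_gt0 : 0 < Lg) (n_gt0 : (0 < n)%N) (m_gt0 : (0 < m)%N).
Hypotheses (Rf_closed : closed_fun Rf) (Rf_convex : convex_efun Rf)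
  (Rf_ninfty : forall x, Rf x != -oo%E) (Rf_xs : Rf xs = rxs%:E)
  (sub_rs : esubgrad Rf xs rs).
Hypotheses (gs_convex : forall j, convex_fun (gs j))
  (gs_smooth : forall j, smooth Lg (gs j)) (sub_ys : forall j, subgrad (gs j) xs (ys j)).
Local Notation f := (fun x => n%:R^-1 * \sum_(k < n) fs k x).
Hypothesis optimality : grad f xs + m%:R^-1 *: \sum_(j < m) ys j + rs = 0.

Local Notation p := (fun _ : 'I_m => m%:R^-1 : R).
Local Notation step := (sdm_step fs gs Rf eta p est).
Local Notation run := (sdm_run fs gs Rf eta p est).
Local Notation gamma := (dual_weight eta Lg).
Implicit Types (s : sdm_state R d n m).

Definition dual_dist s := \sum_(j < m) sqnorm (st_y s j - ys j).

Definition sdm_lyap s := sqnorm (st_x s - xs) + gamma * dual_dist s.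

Definition sdm_w s i := st_x s - eta *: sdm_v fs s i.

Definition sdm_z s i := prox Rf eta (sdm_w s i - eta *: st_ybar s).

Definition ybar_mean s := st_ybar s = m%:R^-1 *: \sum_(j < m) st_y s j.

Let m_neq0 : m%:R != 0 :> R. Proof. by rewrite pnatr_eq0 -lt0n. Qed.

Lemma uniform_stepsize : eta / (m%:R * m%:R^-1) = eta.
Proof. by rewrite mulfV // divr1. Qed.

Lemma ybar_mean_step t s ij : ybar_mean s -> ybar_mean (step t s ij).
Proof.
case: ij => i j; rewrite /ybar_mean /sdm_step /= uniform_stepsize => ybar_eq.
rewrite {1}ybar_eq (bigD1 j) // [in RHS](bigD1 j) //= eqxx -scalerDr.
rewrite [X in _ = _ *: (_ + X)](eq_bigr (fun k => st_y s k)) => [|k /negbTE -> //].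
have shift (u v w : 'rV[R]_d) : u + v + (w - u) = w + v.
  by rewrite addrAC addrCA subrr addr0.
by rewrite shift.
Qed.

Lemma ybar_mean_run t0 s h : ybar_mean s -> ybar_mean (run t0 s h).
Proof. by elim: h t0 s => [|ij h IHh] t0 s //= /(ybar_mean_step t0 _ ij); exact: IHh. Qed.

Lemma sdm_run_rcons t0 s h ij :
  run t0 s (rcons h ij) = step (t0 + size h) (run t0 s h) ij.
Proof. by elim: h t0 s => [|ij' h IHh] t0 s /=; rewrite ?addn0 ?IHh ?addSnnS. Qed.

Lemma sdm_lyap_step t s i j :
  sdm_lyap (step t s (i, j)) <= sqnorm (sdm_z s i - xs)
    + 2 * eta * dotv (sdm_z s i - xs) (st_y s j - ys j)
    + (eta ^+ 2 - gamma) * sqnorm (st_y s j - ys j) + gamma * dual_dist s.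
Proof.
rewrite /sdm_lyap /dual_dist /sdm_step /= uniform_stepsize -/(sdm_w s i) -/(sdm_z s i).
set z := sdm_z s i; set a := z + eta *: st_y s j.
have := prox_smooth_le a eta_gt0 Lg_gt0 (gs_convex j) (gs_smooth j) (sub_ys j).
set x' := prox _ eta a.
have -> : eta^-1 *: (a - x') = st_y s j + eta^-1 *: (z - x').
  by apply/rowP => k; rewrite !mxE; field; rewrite gt_eqF.
have -> : a - (xs + eta *: ys j) = (z - xs) + eta *: (st_y s j - ys j).
  by apply/rowP => k; rewrite !mxE; ring.
rewrite (sqnormD (z - xs)) sqnormZ dotvZr => g_ineq.
rewrite [in leLHS](bigD1 j) //= eqxx [in leRHS](bigD1 j) //=.
rewrite (eq_bigr (fun k => sqnorm (st_y s k - ys k))) => [|k /negbTE -> //].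
lra.
Qed.

Lemma sdm_lyap_mean_dual t s i : ybar_mean s ->
  \sum_(j < m) m%:R^-1 * sdm_lyap (step t s (i, j))
    <= sqnorm (sdm_w s i - (xs - eta *: grad f xs))
       + (gamma - 2 * eta / (Lg * m%:R)) * dual_dist s.
Proof.
move=> ybar_eq.
apply: le_trans (ler_sum _ (fun j _ => ler_wpM2l _ (sdm_lyap_step t s i j))) _.
  by rewrite invr_ge0 ler0n.
rewrite -mulr_sumr !big_split /= -!mulr_sumr !sumr_const card_ord -/(dual_dist s).
rewrite -dotv_sumr sumrB -[sqnorm _ *+ m]mulr_natl -[dual_dist s *+ m]mulr_natl.
set z := sdm_z s i; set w := sdm_w s i; set ystar := m%:R^-1 *: \sum_(j < m) ys j.
have -> : \sum_(j < m) st_y s j - \sum_(j < m) ys j = m%:R *: (st_ybar s - ystar).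
  by rewrite ybar_eq -scalerBr scalerA mulfV // scale1r.
have R_ineq := prox_le_dotv eta_gt0 Rf_closed Rf_ninfty Rf_xs sub_rs
  (w - eta *: st_ybar s) Rf_convex.
change (prox Rf eta (w - eta *: st_ybar s)) with z in R_ineq.
have shift (u b g y : 'rV[R]_d) :
    u - eta *: b - (xs + eta *: - (g + y)) = (u - (xs - eta *: g)) - eta *: (b - y).
  by apply/rowP => k; rewrite !mxE; ring.
rewrite -(addr0_eq optimality) -/ystar shift dotvBl dotvZl in R_ineq.
clearbody z w ystar.
have := dotv_le_sqnorm (w - (xs - eta *: grad f xs)) (z - xs).
move: R_ineq; rewrite dotvZr (dotvC (z - xs)).
set Z := sqnorm (z - xs); set Q := dotv (st_ybar s - ystar) _; set S := dual_dist s.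
have -> : eta ^+ 2 - gamma = - (2 * eta / Lg) by rewrite /dual_weight; ring.
have -> : m%:R^-1 * (m%:R * Z + 2 * eta * (m%:R * Q) + - (2 * eta / Lg) * S + gamma * (m%:R * S))
    = Z + 2 * eta * Q - 2 * eta / (Lg * m%:R) * S + gamma * S.
  by field; rewrite m_neq0 gt_eqF.
lra.
Qed.

Lemma sdm_lyap_mean t s : ybar_mean s ->
  \sum_(ij : 'I_n * 'I_m) (n%:R^-1 * m%:R^-1) * sdm_lyap (step t s ij)
    <= \sum_(i < n) n%:R^-1 * sqnorm (sdm_w s i - (xs - eta *: grad f xs))
       + (gamma - 2 * eta / (Lg * m%:R)) * dual_dist s.
Proof.
move=> ybar_eq; have n_neq0 : n%:R != 0 :> R by rewrite pnatr_eq0 -lt0n.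
rewrite -(pair_bigA _ (fun i j => (n%:R^-1 * m%:R^-1) * sdm_lyap (step t s (i, j)))) /=.
set c := _ * dual_dist s.
have -> : c = \sum_(i < n) n%:R^-1 * c.
  by rewrite -mulr_sumr sumr_const card_ord -[c *+ n]mulr_natl mulrA mulVf ?mul1r.
rewrite -big_split /=; apply: ler_sum => i _; rewrite -mulrDr.
under eq_bigr do rewrite -mulrA; rewrite -mulr_sumr ler_wpM2l ?invr_ge0 ?ler0n //.
exact: sdm_lyap_mean_dual.
Qed.

Definition sdm_Edual s0 t := sdm_expect p t (fun h => dual_dist (run 0 s0 h)).

Lemma sdm_expected_descent s0 t : ybar_mean s0 ->
  sdm_Ex fs gs Rf eta p est s0 xs t.+1 + gamma * sdm_Edual s0 t.+1
    <= sdm_Ew fs gs Rf eta p est s0 xs t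
       + (gamma - 2 * eta / (Lg * m%:R)) * sdm_Edual s0 t.
Proof.
move=> ybar_eq0; rewrite /sdm_Ex /sdm_Edual -!sdm_expectDZ sdm_expect_rcons /=.
apply: ler_sdm_expect => [j|h]; first by rewrite invr_ge0 ler0n.
under eq_bigr do rewrite sdm_run_rcons add0n.
exact: sdm_lyap_mean (ybar_mean_run _ _ _ ybar_eq0).
Qed.

Lemma sdm_linear_convergence s0 (M : nat -> R) (a kappa : R) : ybar_mean s0 ->
  (forall t, 0 <= M t) ->
  (forall t, sdm_Ew fs gs Rf eta p est s0 xs t + M t.+1
     <= (1 - a) * sdm_Ex fs gs Rf eta p est s0 xs t + (1 - n%:R^-1) * M t) ->
  0 < kappa -> kappa^-1 <= a -> kappa^-1 <= n%:R^-1 ->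
  kappa^-1 * gamma <= 2 * eta / (Lg * m%:R) ->
  exists K, 0 < K /\ forall (eps : R) (t : nat), 0 < eps ->
    kappa * ln (K / eps) <= t%:R -> sdm_Ex fs gs Rf eta p est s0 xs t <= eps.
Proof.
move=> ybar_eq0 M_ge0 M_descent kappa_gt0 le_a le_r le_c; set theta := kappa^-1.
pose Ex := sdm_Ex fs gs Rf eta p est s0 xs; pose Ey := sdm_Edual s0.
pose Psi t := Ex t + M t + gamma * Ey t.
have p_ge0 (j : 'I_m) : 0 <= p j by rewrite invr_ge0 ler0n.
have Ex_ge0 t : 0 <= Ex t by apply: sdm_expect_ge0 => // h; exact: sqnorm_ge0.
have Ey_ge0 t : 0 <= Ey t.
  by apply: sdm_expect_ge0 => // h; apply: sumr_ge0 => j _; exact: sqnorm_ge0.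
have gamma_ge0 : 0 <= gamma by rewrite addr_ge0 ?sqr_ge0 // divr_ge0 ?mulr_ge0 ?ltW.
have Psi_ge0 t : 0 <= Psi t by rewrite !addr_ge0 ?mulr_ge0.
have Psi_contr t : Psi t.+1 <= (1 - theta) * Psi t.
  exact: lyapunov_contraction (sdm_expected_descent s0 t ybar_eq0) (M_descent t)
    (Ex_ge0 t) (Ey_ge0 t) (M_ge0 t) le_a le_r le_c.
exists (Psi 0%N + 1); split => [|eps t eps_gt0 t_large]; first by rewrite ltr_pwDr.
apply: le_trans (_ : Ex t <= Psi t) _; first by rewrite /Psi -addrA lerDl addr_ge0 ?mulr_ge0.
apply: (geometric_complexity Psi theta (Psi 0%N + 1) eps t _ Psi_ge0 Psi_contr) => //.
- by rewrite invr_gt0 kappa_gt0 (le_trans le_r) // invf_le1 ?ler1n ?ltr0n.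
- by rewrite lerDl.
- by rewrite ltr_pwDr.
- by rewrite -(ler_pM2l kappa_gt0) mulrA mulfV ?gt_eqF // [leRHS]mul1r.
Qed.
End SDMConvergence.

Lemma sqrtr_mul_div {R : rcfType} (a c x : R) : 0 <= a -> 0 < c -> 0 <= x ->
  Num.sqrt (a * (c * x)) = Num.sqrt a * c * Num.sqrt (x / c).
Proof.
move=> a_ge0 c_gt0 x_ge0.
have -> : a * (c * x) = a * (c ^+ 2 * (x / c)) by congr (_ * _); field; rewrite gt_eqF.
by rewrite sqrtrM // sqrtrM ?sqr_ge0 // sqrtr_sqr gtr0_norm // mulrA.
Qed.

Lemma min_inv_bounds {R : realFieldType} {a b : R} : 0 < a -> 0 < b ->
  let eta := Num.min a^-1 b^-1 in [/\ 0 < eta, 1 <= eta * (a + b) & eta * b <= 1].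
Proof.
move=> a_gt0 b_gt0 eta; have ab_gt0 : 0 < a + b by rewrite addr_gt0.
split; first by rewrite lt_min !invr_gt0 a_gt0.
  rewrite -ler_pdivrMr // div1r le_min !lef_pV2 ?posrE //.
  by rewrite lerDl lerDr !ltW.
by rewrite -ler_pdivlMr // div1r ge_min lexx orbT.
Qed.

Lemma rate_constant_bounds {R : realType} {omega L mu s q : R} {n m : nat} :
  0 < omega -> 0 < L -> 0 < mu -> 0 < s -> s ^+ 2 = omega -> 0 < q ->
  let kappa := (1 + 5 / omega + 1 / s) * (n%:R + m%:R + L / mu + q) in
  [/\ n%:R <= kappa, 5 * L + s * mu * q <= omega * mu * kappa & q / s + 2 * m%:R <= 2 * kappa].
Proof.
move=> omega_gt0 L_gt0 mu_gt0 s_gt0 s_sqr q_gt0 kappa.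
set A := n%:R + m%:R + L / mu + q.
have n_ge0 : 0 <= n%:R :> R by exact: ler0n.
have m_ge0 : 0 <= m%:R :> R by exact: ler0n.
have Lmu_ge0 : 0 <= L / mu by rewrite divr_ge0 ?ltW.
have [A_ge_n A_ge_m A_ge_q] : [/\ n%:R <= A, m%:R <= A & q <= A] by rewrite /A; split; lra.
have A_mu : L <= A * mu.
  by rewrite -[L](@divfK _ mu) ?gt_eqF // ler_wpM2r ?ltW // /A; lra.
have As_ge0 : 0 <= A / s by rewrite divr_ge0 ?ltW //; lra.
have As2_ge0 : 0 <= A / s ^+ 2 by rewrite divr_ge0 ?sqr_ge0 //; lra.
split.
- have C_ge1 : 1 <= 1 + 5 / omega + 1 / s by rewrite -addrA lerDl addr_ge0 ?divr_ge0 ?ltW.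
  by apply: le_trans A_ge_n _; rewrite ler_peMl //; lra.
- have -> : omega * mu * kappa = (s ^+ 2 + 5 + s) * (A * mu).
    by rewrite /kappa -/A -s_sqr; field; rewrite gt_eqF.
  have := ler_wpM2l (ltW (mulr_gt0 s_gt0 mu_gt0)) A_ge_q.
  have := sqr_ge0 s; nra.
- have -> : 2 * kappa = 2 * A + 10 * (A / s ^+ 2) + 2 * (A / s).
    by rewrite /kappa -/A -s_sqr; field; rewrite gt_eqF.
  have : q / s <= A / s by rewrite ler_pM2r ?invr_gt0.
  lra.
Qed.

Lemma sdm_rates {R : realType} {omega L Lg mu s q : R} {n m : nat} :
  0 < omega -> 0 < L -> 0 < Lg -> 0 < mu -> (0 < n)%N -> (0 < m)%N ->
  0 < s -> s ^+ 2 = omega -> 0 < q -> q ^+ 2 * mu = m%:R * Lg ->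
  let eta := Num.min (5 * L)^-1 (s * mu * q)^-1 in
  let kappa := (1 + 5 / omega + 1 / s) * (n%:R + m%:R + L / mu + q) in
  [/\ 0 < eta, 0 < kappa, kappa^-1 <= omega * eta * mu, kappa^-1 <= n%:R^-1
    & kappa^-1 * dual_weight eta Lg <= 2 * eta / (Lg * m%:R)].
Proof.
move=> omega_gt0 L_gt0 Lg_gt0 mu_gt0 n_gt0 m_gt0 s_gt0 s_sqr q_gt0 q_sqr eta kappa.
have b_gt0 : 0 < s * mu * q by rewrite !mulr_gt0.
have L5_gt0 : 0 < 5 * L by rewrite mulr_gt0.
have [eta_gt0 eta_large eta_small] := min_inv_bounds L5_gt0 b_gt0.
have [kappa_ge_n kappa_x kappa_y] :=
  rate_constant_bounds (n := n) (m := m) omega_gt0 L_gt0 mu_gt0 s_gt0 s_sqr q_gt0.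
have kappa_gt0 : 0 < kappa by apply: lt_le_trans kappa_ge_n; rewrite ltr0n.
have Lgm_gt0 : 0 < Lg * m%:R by rewrite mulr_gt0 ?ltr0n.
split => //.
- rewrite -(ler_pM2r kappa_gt0) mulVf ?gt_eqF //; apply: le_trans eta_large _.
  rewrite (_ : _ * kappa = eta * (omega * mu * kappa)); last by ring.
  by rewrite ler_pM2l.
- by rewrite lef_pV2 ?posrE ?ltr0n.
- rewrite -(ler_pM2r kappa_gt0) mulrAC mulVf ?gt_eqF // mul1r -(ler_pM2r Lgm_gt0).
  have -> : dual_weight eta Lg * (Lg * m%:R) = eta * (eta * Lg * m%:R + 2 * m%:R).
    by rewrite /dual_weight; field; rewrite gt_eqF.
  have -> : 2 * eta / (Lg * m%:R) * kappa * (Lg * m%:R) = eta * (2 * kappa).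
    by field; rewrite !gt_eqF ?ltr0n.
  rewrite ler_pM2l //; apply: le_trans kappa_y; rewrite lerD2r ler_pdivlMr //.
  (* [eta L_g m s <= q] follows from [eta s mu q <= 1] and [q^2 mu = m L_g]. *)
  have -> : eta * Lg * m%:R * s = eta * (s * mu * q) * q.
    by transitivity (eta * s * (q ^+ 2 * mu)); [rewrite q_sqr | ]; ring.
  by rewrite -[leRHS]mul1r ler_pM2r.
Qed.

Lemma sdm_stepsize_rates {R : realType} {omega L Lg mu : R} {n m : nat} :
  0 < omega -> 0 < L -> 0 < Lg -> 0 < mu -> (0 < n)%N -> (0 < m)%N ->
  let eta := Num.min (5 * L)^-1 (Num.sqrt (omega * mu * m%:R * Lg))^-1 in
  let kappa := (1 + 5 / omega + 1 / Num.sqrt omega)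
                 * (n%:R + m%:R + L / mu + Num.sqrt (m%:R * Lg / mu)) in
  [/\ 0 < eta, 0 < kappa, kappa^-1 <= omega * eta * mu, kappa^-1 <= n%:R^-1
    & kappa^-1 * dual_weight eta Lg <= 2 * eta / (Lg * m%:R)].
Proof.
move=> omega_gt0 L_gt0 Lg_gt0 mu_gt0 n_gt0 m_gt0 eta kappa.
set q := Num.sqrt (m%:R * Lg / mu).
have q_gt0 : 0 < q by rewrite sqrtr_gt0 divr_gt0 ?mulr_gt0 ?ltr0n.
have q_sqr : q ^+ 2 * mu = m%:R * Lg.
  by rewrite /q sqr_sqrtr ?divfK ?gt_eqF // ltW // divr_gt0 ?mulr_gt0 ?ltr0n.
have -> : eta = Num.min (5 * L)^-1 (Num.sqrt omega * mu * q)^-1.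
  rewrite /eta -[omega * mu * _ * _]mulrA -[omega * mu * _]mulrA.
  by rewrite sqrtr_mul_div ?ltW ?mulr_gt0 ?ltr0n.
have s_gt0 : 0 < Num.sqrt omega by rewrite sqrtr_gt0.
exact: sdm_rates omega_gt0 L_gt0 Lg_gt0 mu_gt0 n_gt0 m_gt0 s_gt0
  (sqr_sqrtr (ltW omega_gt0)) q_gt0 q_sqr.
Qed.

Local Close Scope classical_set_scope.

Theorem corollary3 (R : realType) (omega : R) (Homega : 0 < omega) :
  exists C : R, 0 < C /\
  forall (d n m : nat) (fs : 'I_n -> 'rV[R]_d -> R) (gs : 'I_m -> 'rV[R]_d -> R)
         (Rf : 'rV[R]_d -> \bar R) (L Lg mu : R)
         (xs : 'rV[R]_d) (est : estimator)
         (x0 : 'rV[R]_d) (y0 : 'I_m -> 'rV[R]_d) (u0 : 'I_n -> 'rV[R]_d),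
    (0 < n)%N -> (0 < m)%N ->
    0 < L -> 0 < Lg -> 0 < mu ->
    let f := fun x => n%:R^-1 * \sum_(i < n) fs i x in
    let p := fun _ : 'I_m => m%:R^-1 in
    let F := fun x => ((f x + m%:R^-1 * \sum_(j < m) gs j x)%:E + Rf x)%E in
    (forall i, convex_fun (fs i) /\ smooth L (fs i)) ->
    strongly_convex mu f ->
    proper_fun Rf -> closed_fun Rf -> convex_efun Rf ->
    (forall j, convex_fun (gs j) /\ smooth Lg (gs j)) ->
    (* standing optimality assumption *)
    (forall x, (F xs <= F x)%E) ->
    (exists (ys : 'I_m -> 'rV[R]_d) (rs : 'rV[R]_d),
        (forall j, subgrad (gs j) xs (ys j)) /\ esubgrad Rf xs rs /\
        grad f xs + m%:R^-1 *: \sum_(j < m) ys j + rs = 0) ->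
    (* SVRG: positive period, common initial reference point *)
    (forall T, est = SVRG T -> (0 < T)%N /\ forall k k', u0 k = u0 k') ->
    let s0 := SDMState x0 y0 (m%:R^-1 *: \sum_(j < m) y0 j) u0 in
    let eta0 := (5 * L)^-1 in
    let rho := n%:R^-1 in
    (* part (b) of the gradient-estimator condition *)
    (forall eta, 0 < eta <= eta0 ->
       exists M : nat -> R, (forall t, 0 <= M t) /\
       forall t,
         sdm_Ew fs gs Rf eta p est s0 xs t + M t.+1
         <= (1 - omega * eta * mu) * sdm_Ex fs gs Rf eta p est s0 xs t
            + (1 - rho) * M t) ->
    let eta_best := (Num.sqrt (omega * mu * m%:R * Lg))^-1 in
    let eta := Num.min eta0 eta_best in
    exists K : R, 0 < K /\
    forall (eps : R) (t : nat), 0 < eps ->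
      C * (n%:R + m%:R + L / mu + Num.sqrt (m%:R * Lg / mu)) * ln (K / eps)
        <= t%:R ->
      sdm_Ex fs gs Rf eta p est s0 xs t <= eps.
Proof.
pose C := 1 + 5 / omega + 1 / Num.sqrt omega.
have C_gt0 : 0 < C by rewrite !addr_gt0 ?divr_gt0 ?sqrtr_gt0.
exists C; split => // d n m fs gs Rf L Lg mu xs est x0 y0 u0 n_gt0 m_gt0 L_gt0 Lg_gt0 mu_gt0
  f p F _ _ Rf_proper Rf_closed Rf_convex gs_hyp _ [ys [rs [sub_ys [sub_rs optimality]]]] _
  s0 eta0 rho estimator_b eta_best eta.
have [eta_gt0 kappa_gt0 rate_x rate_M rate_y] :=
  sdm_stepsize_rates Homega L_gt0 Lg_gt0 mu_gt0 n_gt0 m_gt0.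
(* The hypotheses on the f_i, strong convexity, optimality of xs and the SVRG data
   are used only through part (b), which is assumed. *)
have eta_le : 0 < eta <= eta0 by rewrite eta_gt0 ge_min lexx.
have [M [M_ge0 M_descent]] := estimator_b eta eta_le.
have [rxs Rf_xs] := esubgrad_fin Rf_proper sub_rs.
have [K [K_gt0 K_conv]] := sdm_linear_convergence fs gs Rf eta Lg est xs rs ys rxs
  eta_gt0 Lg_gt0 n_gt0 m_gt0 Rf_closed Rf_convex Rf_proper.1 Rf_xs sub_rs
  (fun j => (gs_hyp j).1) (fun j => (gs_hyp j).2) sub_ys optimality s0 M
  _ _ erefl M_ge0 M_descent kappa_gt0 rate_x rate_M rate_y.
by exists K.
Qed.
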